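(* If two elements of $H$ are conjugate in $A_1(H)$, then they are conjugate in $H$.
   Context: Let $H$ be a group and $\{F_i\}_{i\in I}$ the set of all finitely generated abelian subgroups of $H$; let $C_i=C_H(F_i)$. Write $\Delta_K=\{(k,k):k\in K\}$ and $\Delta'_F=\{(f^{-1},f):f\in F\}$ in $H\times H$. $A_1(H)$ is the generalized HNN extension of $H\times H$ with stable letters $t_i$ ($i\in I$) and relations $(k,fk)=t_i(f^{-1},fk)t_i^{-1}$ for all $f\in F_i$, $k\in C_i$ (identifying $(1\times F_i)\cdot\Delta_{C_i}\cong\Delta'_{F_i}\cdot(1\times C_i)$ via $(k,fk)\mapsto(f^{-1},fk)$). $H$ is included in $A_1(H)$ via $h\mapsto(h,1)$. *)

From Stdlib Require Import List.
Import ListNotations.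
Set Implicit Arguments.

Record group := Group {
  carrier :> Type;
  gmul : carrier -> carrier -> carrier;
  gone : carrier;
  ginv : carrier -> carrier;
  gmulA : forall x y z, gmul x (gmul y z) = gmul (gmul x y) z;
  gmul1 : forall x, gmul gone x = x;
  gmulg1 : forall x, gmul x gone = x;
  gmulV : forall x, gmul (ginv x) x = gone;
  gmulgV : forall x, gmul x (ginv x) = gone
}.

Arguments gmul {g} _ _.
Arguments gone {g}.
Arguments ginv {g} _.

Section Sub.
Variable H : group.

Definition is_subgroup (S : H -> Prop) : Prop :=
  S gone /\ (forall x y, S x -> S y -> S (gmul x y)) /\ (forall x, S x -> S (ginv x)).

Definition is_abelian (S : H -> Prop) : Prop :=
  forall x y, S x -> S y -> gmul x y = gmul y x.

Inductive gen (l : list H) : H -> Prop :=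
| gen_one : gen l gone
| gen_in : forall x, In x l -> gen l x
| gen_mul : forall x y, gen l x -> gen l y -> gen l (gmul x y)
| gen_inv : forall x, gen l x -> gen l (ginv x).

Definition finitely_generated (S : H -> Prop) : Prop :=
  exists l : list H, forall x, S x <-> gen l x.

Definition fg_abelian_subgroup (S : H -> Prop) : Prop :=
  is_subgroup S /\ is_abelian S /\ finitely_generated S.

Definition fgab_index : Type := { S : H -> Prop | fg_abelian_subgroup S }.

Definition centralizer (F : H -> Prop) : H -> Prop :=
  fun k => forall f, F f -> gmul k f = gmul f k.

(** Letters of words presenting A_1(H): elements of H x H, and the stable
    letters t_i and their formal inverses. *)
Inductive letter : Type :=
| B : H * H -> letter
| Tp : fgab_index -> letter
| Tm : fgab_index -> letter.

Definition word := list letter.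

Definition pmul (p q : H * H) : H * H := (gmul (fst p) (fst q), gmul (snd p) (snd q)).
Definition pinv (p : H * H) : H * H := (ginv (fst p), ginv (snd p)).

Definition letter_inv (a : letter) : letter :=
  match a with B p => B (pinv p) | Tp i => Tm i | Tm i => Tp i end.

Definition word_inv (w : word) : word := rev (map letter_inv w).

(** Defining relators of A_1(H) (as pairs of equal words):
    the multiplication table of H x H, free cancellation of t_i, and the
    HNN relations (k, f k) = t_i (f^-1, f k) t_i^-1, f in F_i, k in C_i. *)
Inductive A1_rel : word -> word -> Prop :=
| rel_one : A1_rel [B (gone, gone)] []
| rel_mul : forall p q, A1_rel [B p; B q] [B (pmul p q)]
| rel_TpTm : forall i, A1_rel [Tp i; Tm i] []
| rel_TmTp : forall i, A1_rel [Tm i; Tp i] []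
| rel_hnn : forall (i : fgab_index) (f k : H),
    proj1_sig i f -> centralizer (proj1_sig i) k ->
    A1_rel [B (k, gmul f k)] [Tp i; B (ginv f, gmul f k); Tm i].

Inductive A1_eq : word -> word -> Prop :=
| A1_step : forall u v x y, A1_rel x y -> A1_eq (u ++ x ++ v) (u ++ y ++ v)
| A1_refl : forall w, A1_eq w w
| A1_sym : forall w1 w2, A1_eq w1 w2 -> A1_eq w2 w1
| A1_trans : forall w1 w2 w3, A1_eq w1 w2 -> A1_eq w2 w3 -> A1_eq w1 w3.

Definition incl (h : H) : word := [B (h, gone)].

Definition conj_in_A1 (h1 h2 : H) : Prop :=
  exists g : word, A1_eq (g ++ incl h1 ++ word_inv g) (incl h2).

Definition conj_in_H (h1 h2 : H) : Prop :=
  exists h : H, gmul (gmul h h1) (ginv h) = h2.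

End Sub.

(* A_1(H) acts on the set H x H: a letter (p, q) acts by left multiplication
   in both coordinates and t_i by (x, y) |-> (c_i(y) x, y), where c_i(y) lies
   in C_i and satisfies c_i(k y) = k c_i(y) for k in C_i (choose a
   representative r of each right coset C_i y and put c_i(y) = y r^-1); this
   equivariance is exactly what the HNN relations need.  Every word acts by
   (x, y) |-> (a x, b) with (a, b) depending only on y, so if g h1 g^-1 = h2
   in A_1(H), evaluating both sides at g (1, 1) = (a, b) yields a h1 = h2 a. *)

From Stdlib Require Import List ClassicalEpsilon FunctionalExtensionality PropExtensionality.
Import ListNotations.
Set Implicit Arguments.
Unset Strict Implicit.

Arguments gmulA {g} x y z.
Arguments gmul1 {g} x.
Arguments gmulg1 {g} x.
Arguments gmulV {g} x.
Arguments gmulgV {g} x.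

Section Centralizer.
Variable H : group.

Lemma gmulKg (a x : H) : gmul (ginv a) (gmul a x) = x.
Proof. rewrite gmulA, gmulV, gmul1. reflexivity. Qed.

Lemma gmulKVg (a x : H) : gmul a (gmul (ginv a) x) = x.
Proof. rewrite gmulA, gmulgV, gmul1. reflexivity. Qed.

Variable F : H -> Prop.
Let C := @centralizer H F.

Lemma centralizer1 : C gone.
Proof. intros f _. rewrite gmul1, gmulg1. reflexivity. Qed.

Lemma centralizerM a b : C a -> C b -> C (gmul a b).
Proof.
  intros Ca Cb f Ff.
  rewrite <- gmulA, (Cb f Ff), gmulA, (Ca f Ff), gmulA. reflexivity.
Qed.

Lemma centralizerV a : C a -> C (ginv a).
Proof.
  intros Ca f Ff.
  rewrite <- (gmulg1 (gmul (ginv a) f)), <- (gmulgV a), gmulA.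
  rewrite <- (gmulA (ginv a) f a), <- (Ca f Ff), gmulA, gmulV, gmul1.
  reflexivity.
Qed.

Definition in_rcoset (y z : H) : Prop := exists k, C k /\ y = gmul k z.

Lemma in_rcosetM k y : C k -> in_rcoset (gmul k y) = in_rcoset y.
Proof.
  intros Ck. apply functional_extensionality; intro z.
  apply propositional_extensionality; split; intros [k' [Ck' E]].
  - exists (gmul (ginv k) k'). split.
    + apply centralizerM; [apply centralizerV|]; assumption.
    + rewrite <- gmulA, <- E. symmetry. apply gmulKg.
  - exists (gmul k k'). split.
    + apply centralizerM; assumption.
    + rewrite E, gmulA. reflexivity.
Qed.

Definition rcoset_repr (y : H) : H := epsilon (inhabits gone) (in_rcoset y).

Lemma rcoset_reprP y : in_rcoset y (rcoset_repr y).
Proof.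
  unfold rcoset_repr. apply epsilon_spec. exists y, gone. split.
  - exact centralizer1.
  - rewrite gmul1. reflexivity.
Qed.

Definition cent_part (y : H) : H := gmul y (ginv (rcoset_repr y)).

Lemma cent_part_centralizer y : C (cent_part y).
Proof.
  destruct (rcoset_reprP y) as [k [Ck E]]. unfold cent_part.
  rewrite E at 1. rewrite <- gmulA, gmulgV, gmulg1. exact Ck.
Qed.

Lemma cent_partM k y : C k -> cent_part (gmul k y) = gmul k (cent_part y).
Proof.
  intros Ck. unfold cent_part, rcoset_repr.
  rewrite (in_rcosetM y Ck), gmulA. reflexivity.
Qed.

End Centralizer.

Section Action.
Variable H : group.

Definition stable_act (i : fgab_index H) : H -> H := cent_part (proj1_sig i).

Definition letter_act (a : letter H) (z : H * H) : H * H :=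
  match a with
  | B _ p => pmul H p z
  | Tp i => (gmul (stable_act i (snd z)) (fst z), snd z)
  | Tm i => (gmul (ginv (stable_act i (snd z))) (fst z), snd z)
  end.

Fixpoint word_act (w : word H) (z : H * H) : H * H :=
  match w with [] => z | a :: w => letter_act a (word_act w z) end.

Lemma word_act_cat u v z : word_act (u ++ v) z = word_act u (word_act v z).
Proof. induction u as [|a u IH]; simpl; [|rewrite IH]; reflexivity. Qed.

Lemma word_act_rel x y : A1_rel x y -> forall z, word_act x z = word_act y z.
Proof.
  intros R [zx zy]. destruct R as [| p q | i | i | i f k Ff Ck]; simpl.
  - unfold pmul; simpl. rewrite !gmul1. reflexivity.
  - unfold pmul; simpl. rewrite !gmulA. reflexivity.
  - rewrite gmulKVg. reflexivity.
  - rewrite gmulKg. reflexivity.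
  - unfold pmul, stable_act; simpl.
    assert (Cf : @centralizer H (proj1_sig i) f).
    { intros g Fg. apply (proj1 (proj2 (proj2_sig i))); assumption. }
    rewrite (cent_partM zy (centralizerM Cf Ck)).
    set (c := cent_part (proj1_sig i) zy).
    assert (cf : gmul c f = gmul f c) by exact (cent_part_centralizer zy Ff).
    (* f k c f^-1 c^-1 = k, as f commutes with both k and c *)
    f_equal. rewrite <- (Ck f Ff), <- (gmulA k f c), <- cf, gmulA.
    rewrite (gmulA k c f), <- (gmulA (gmul k c) f), gmulgV, gmulg1.
    rewrite <- gmulA, gmulKVg. reflexivity.
Qed.

Lemma word_act_A1_eq w1 w2 : A1_eq w1 w2 -> forall z, word_act w1 z = word_act w2 z.
Proof.
  induction 1 as [u v x y R | | w1 w2 _ IH | w1 w2 w3 _ IH12 _ IH23]; intro z.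
  - rewrite !word_act_cat, (word_act_rel R). reflexivity.
  - reflexivity.
  - symmetry; apply IH.
  - rewrite IH12; apply IH23.
Qed.

Lemma word_act_invK g z : word_act (word_inv g) (word_act g z) = z.
Proof.
  induction g as [|a g IH]; [reflexivity|].
  unfold word_inv in *. simpl. rewrite word_act_cat. simpl.
  destruct (word_act g z) as [x y].
  destruct a as [p|i|i]; simpl; unfold pmul, pinv; simpl;
    rewrite ?gmulKg, ?gmulKVg; exact IH.
Qed.

Lemma word_act_fst_mul g x y :
  word_act g (x, y) = (gmul (fst (word_act g (gone, y))) x, snd (word_act g (gone, y))).
Proof.
  induction g as [|a g IH]; simpl; [rewrite gmul1; reflexivity|].
  rewrite IH. destruct (word_act g (gone, y)) as [p q].
  destruct a; simpl; unfold pmul; simpl; rewrite gmulA; reflexivity.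
Qed.

End Action.

Theorem lemma4p6 (H : group) (h1 h2 : H) :
  @conj_in_A1 H h1 h2 -> @conj_in_H H h1 h2.
Proof.
  intros [g Hg].
  pose proof (word_act_A1_eq Hg (word_act g (gone, gone))) as E.
  rewrite !word_act_cat, word_act_invK in E. simpl in E. unfold pmul in E. simpl in E.
  rewrite !gmulg1, word_act_fst_mul in E.
  destruct (word_act g (gone, gone)) as [a b]. simpl in E.
  injection E as Ea _. exists a.
  rewrite Ea, <- gmulA, gmulgV, gmulg1. reflexivity.
Qed.
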